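(* Let $X,Y$ be Banach spaces, let $S$ be a subset of $X$ (with the induced metric), and let $f:S\to Y$ be a coarse homeomorphism that is coarse Lipschitz; let $g:Y\to S$ be a coarsely continuous map with $\sup_{x\in S}\|g(f(x))-x\|<\infty$ and $K:=\sup_{y\in Y}\|f(g(y))-y\|<\infty$. Then for all $0<t\le1$, $$\bar{\delta}_X\left(\frac{t}{56\,{\rm Lip}_\infty(f)\,c_\infty(f)}\right)\le\bar{\rho}_Y(t),$$ where $c_\infty(f)$ is computed with respect to the constant $K$.
   Context: All Banach spaces are real and infinite-dimensional; $B_X,S_X$ are the closed unit ball and sphere; $B_Z(z,r)$ is the closed ball of radius $r$ about $z$; for $A\subseteq Y$, $A^K:=\{y:\|y-a\|\le K\text{ for some }a\in A\}$. $\bar{\rho}_Y(t):=\sup_{y\in S_Y}\inf_{\dim(Y/Z)<\infty}\sup_{z\in S_Z}\|y+tz\|-1$ and $\bar{\delta}_X(t):=\inf_{x\in S_X}\sup_{\dim(X/Z)<\infty}\inf_{z\in S_Z}\|x+tz\|-1$ (over finite-codimensional subspaces $Z$). A map $h$ between metric spaces is coarsely continuous if $\omega_h(t):=\sup\{d(h(x),h(y)): d(x,y)\le t\}<\infty$ for all $t>0$. $f:S\to Y$ is a coarse homeomorphism if it is coarsely continuous and there is a coarsely continuous $g:Y\to S$ with $\sup_x\|g(f(x))-x\|<\infty$ and $\sup_y\|f(g(y))-y\|<\infty$; it is known that then $f$ is co-coarsely continuous with constant $K=\sup_y\|f(g(y))-y\|$, i.e. for every $d>K$ there is $\delta(d)>0$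 with $f(B_S(x,\delta))^K\supseteq B_Y(f(x),d)$ for all $x\in S$. ${\rm Lip}_s(f):=\sup\{\|f(x)-f(y)\|/\|x-y\|:\|x-y\|\ge s\}$, ${\rm Lip}_\infty(f):=\inf_{s>0}{\rm Lip}_s(f)$; $f$ is coarse Lipschitz if ${\rm Lip}_s(f)<\infty$ for some $s>0$. For $d>K$, $c_d$ is the infimum of all $c>0$ with $f(B_S(x,cr))^K\supseteq B_Y(f(x),r)$ for all $x\in S$, $r\ge d$, and $c_\infty(f):=\inf_{d>K}c_d=\lim_{d\to\infty}c_d$. *)

From HB Require Import structures.
From mathcomp Require Import all_boot all_order all_algebra.
From mathcomp Require Import all_classical all_reals all_analysis.
Set Implicit Arguments. Unset Strict Implicit. Unset Printing Implicit Defensive.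
Import Order.TTheory GRing.Theory Num.Theory.
Import numFieldNormedType.Exports.
Local Open Scope classical_set_scope.
Local Open Scope ring_scope.

Section Defs.
Variable R : realType.

Definition infinite_dimensional (X : normedModType R) : Prop :=
  forall (n : nat) (v : 'I_n -> X),
    exists x : X, ~ (exists a : 'I_n -> R, x = \sum_(i < n) a i *: v i).

Definition is_subspace (Y : normedModType R) (Z : set Y) : Prop :=
  Z 0 /\ forall (a : R) (x y : Y), Z x -> Z y -> Z (a *: x + y).

(* Z is a finite-codimensional subspace: dim(Y/Z) < oo, i.e. Y = Z + span(v_1..v_n) *)
Definition finite_codim (Y : normedModType R) (Z : set Y) : Prop :=
  is_subspace Z /\
  exists (n : nat) (v : 'I_n -> Y), forall y : Y,
    exists (a : 'I_n -> R) (z : Y), Z z /\ y = z + \sum_(i < n) a i *: v i.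

Definition sphere_of (Y : normedModType R) (Z : set Y) : set Y :=
  [set z | Z z /\ `|z| = 1].

Definition rho_bar (Y : normedModType R) (t : R) : R :=
  sup [set inf [set sup [set `|y + t *: z| | z in sphere_of Z]
               | Z in [set Z : set Y | finite_codim Z]] - 1
      | y in sphere_of [set: Y]].

Definition delta_bar (X : normedModType R) (t : R) : R :=
  inf [set sup [set inf [set `|x + t *: z| | z in sphere_of Z]
               | Z in [set Z : set X | finite_codim Z]] - 1
      | x in sphere_of [set: X]].

Definition coarsely_continuous_on (X Y : normedModType R) (A : set X)
    (h : X -> Y) : Prop :=
  forall t : R, 0 < t -> exists M : R, forall x y : X, A x -> A y ->
    `|x - y| <= t -> `|h x - h y| <= M.

Definition Lip_s (X Y : normedModType R) (S : set X) (f : X -> Y) (s : R)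
    : \bar R :=
  ereal_sup [set ((`|f p.1 - f p.2| / `|p.1 - p.2|)%:E)
            | p in [set p : X * X | S p.1 /\ S p.2 /\ s <= `|p.1 - p.2|]].

Definition Lip_inf (X Y : normedModType R) (S : set X) (f : X -> Y) : \bar R :=
  ereal_inf [set Lip_s S f s | s in [set s : R | 0 < s]].

Definition coarse_lipschitz (X Y : normedModType R) (S : set X) (f : X -> Y)
    : Prop :=
  exists s : R, 0 < s /\ (Lip_s S f s < +oo)%E.

(* the admissible constants c for c_d: c > 0 and
   f(B_S(x, c r))^K contains B_Y(f x, r) for all x in S and r >= d *)
Definition c_admissible (X Y : normedModType R) (S : set X) (f : X -> Y)
    (K d c : R) : Prop :=
  0 < c /\
  forall (x : X) (r : R), S x -> d <= r ->
    forall y : Y, `|y - f x| <= r ->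
      exists x' : X, S x' /\ `|x' - x| <= c * r /\ `|y - f x'| <= K.

(* c_d (extended real: inf of the empty set is +oo) *)
Definition c_d (X Y : normedModType R) (S : set X) (f : X -> Y) (K d : R)
    : \bar R :=
  ereal_inf [set c%:E | c in [set c : R | c_admissible S f K d c]].

Definition c_inf (X Y : normedModType R) (S : set X) (f : X -> Y) (K : R)
    : \bar R :=
  ereal_inf [set c_d S f K d | d in [set d : R | K < d]].

End Defs.

From HB Require Import structures.
From mathcomp Require Import all_boot all_order all_algebra.
From mathcomp Require Import all_classical all_reals all_analysis.
From mathcomp Require Import ring lra.
Import Order.TTheory GRing.Theory Num.Theory.
Import numFieldNormedType.Exports.
Local Open Scope classical_set_scope.
Local Open Scope ring_scope.
Set Implicit Arguments. Unset Strict Implicit. Unset Printing Implicit Defensive.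

(* Work at a large scale r. Since a constant c2 < c_oo(f) is not admissible,
   there are a in S and y in Y with |y - f a| = r whose coarse preimage
   b = g y is farther than c2 r from a, while an admissible c0 slightly above
   c_oo(f) keeps b within c0 r + O(1) of a. Near the midpoint of f a and y the
   modulus rho_bar provides a 1/2-separated sequence m_k (a Riesz sequence in a
   finite-codimensional subspace) with |m_k - f a| and |m_k - y| at most
   r/2 (1 + rho_bar + eta). Their preimages e_k = g m_k lie within
   c0 r/2 (1 + rho_bar + eta) + O(1) of both a and b and, by the large-scale
   Lipschitz bound, are pairwise r t / (8 Lip) - O(1) apart. Pigeonholing in the
   finite-dimensional quotient X/Z makes two of them differ by almost some z in
   Z; then (a - b)/2 - z/2 is short compared to |a - b|/2 and, by convexity,
   delta_bar at t / (56 Lip c) is at most rho_bar + eta. *)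

Section ZmodIdentities.
Variable V : zmodType.
Implicit Types x y z t a b p q : V.

Lemma subrACA x y z t : x - y - (z - t) = x - z - (y - t).
Proof. by rewrite !opprD !opprK addrACA. Qed.

Lemma subrBB_residual x y a b p q :
  x - y - (a - b) = (x - (a + p)) - (y - (b + q)) + (p - q).
Proof.
rewrite [in RHS]subrACA.
have -> : a + p - (b + q) = a - b + (p - q) by rewrite opprD addrACA.
by rewrite (opprD (a - b)) (addrA (x - y)) subrK.
Qed.

Lemma subr_telescope a b x y z : a - b - z = (a - x) + (x - y - z) + (y - b).
Proof.
by rewrite -(addrA x) (subrKA x) (addrC (- y)) -[RHS]addrA (subrKA y) [RHS]addrA addrAC.
Qed.

End ZmodIdentities.

(** * Finite-dimensional subspaces and Riesz sequences *)

Section Subspaces.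
Variables (R : realType) (V : normedModType R).
Implicit Types (C W Z : set V) (v : nat -> V).

Lemma subspace0 C : is_subspace C -> C 0.
Proof. by case. Qed.

Lemma subspaceD C x y : is_subspace C -> C x -> C y -> C (x + y).
Proof. by move=> [_ hC] Cx Cy; have := hC 1 x y Cx Cy; rewrite scale1r. Qed.

Lemma subspaceZ C a x : is_subspace C -> C x -> C (a *: x).
Proof. by move=> [C0 hC] Cx; have := hC a x 0 Cx C0; rewrite addr0. Qed.

Lemma subspaceN C x : is_subspace C -> C x -> C (- x).
Proof. by move=> hC Cx; rewrite -scaleN1r; apply: subspaceZ. Qed.

Lemma subspaceB C x y : is_subspace C -> C x -> C y -> C (x - y).
Proof. by move=> hC Cx Cy; apply: subspaceD => //; apply: subspaceN. Qed.

Definition vspan m v : set V :=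
  [set y | exists a : nat -> R, y = \sum_(i < m) a i *: v i].

Definition add_line C (u : V) : set V :=
  [set x | exists c b, C c /\ x = c + b *: u].

Lemma vspan0 v : vspan 0 v = [set 0].
Proof.
apply/seteqP; split=> y; first by case=> a ->; rewrite big_ord0.
by move=> ->; exists (fun=> 0); rewrite big_ord0.
Qed.

Lemma vspan_recr m v : vspan m.+1 v = add_line (vspan m v) (v m).
Proof.
apply/seteqP; split=> y.
  case=> a ->; rewrite big_ord_recr.
  by exists (\sum_(i < m) a i *: v i), (a m); split => //; exists a.
case=> _ [b [[a ->] ->]]; exists (fun i => if i == m then b else a i).
rewrite big_ord_recr /= eqxx; congr (_ + _); apply: eq_bigr => i _.
by rewrite ltn_eqF.
Qed.

Lemma vspan_mem m v i : (i < m)%N -> vspan m v (v i).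
Proof.
move=> im; exists (fun j => (j == i)%:R).
rewrite (bigD1 (Ordinal im)) //= eqxx scale1r big1 ?addr0 // => j /eqP ji.
suff /negbTE -> : (j : nat) != i by rewrite scale0r.
by apply/eqP => eji; apply: ji; apply: val_inj.
Qed.

Lemma vspan_sub C m v : is_subspace C -> (forall i, (i < m)%N -> C (v i)) ->
  vspan m v `<=` C.
Proof.
move=> hC Cv _ [a ->]; apply: big_ind => [|x y|i _]; first exact: subspace0.
  exact: subspaceD.
by apply: subspaceZ => //; apply: Cv.
Qed.

Lemma add_line_subspace C u : is_subspace C -> is_subspace (add_line C u).
Proof.
move=> hC; split.
  by exists 0, 0; rewrite scale0r addr0; split => //; apply: subspace0.
move=> a _ _ [c [b [Cc ->]]] [c' [b' [Cc' ->]]].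
exists (a *: c + c'), (a * b + b'); split.
  by apply: subspaceD => //; apply: subspaceZ.
by rewrite scalerDr scalerDl scalerA addrACA.
Qed.

Lemma vspan_subspace m v : is_subspace (vspan m v).
Proof.
elim: m => [|m IH]; last by rewrite vspan_recr; apply: add_line_subspace.
by rewrite vspan0; split => // a x y -> ->; rewrite scaler0 addr0.
Qed.

Lemma vspan_cat m n v v' y y' : vspan m v y -> vspan n v' y' ->
  vspan (m + n) (fun k => if (k < m)%N then v k else v' (k - m)%N) (y + y').
Proof.
move=> [a ->] [a' ->]; exists (fun k => if (k < m)%N then a k else a' (k - m)%N).
rewrite big_split_ord /=; congr (_ + _); apply: eq_bigr => i _.
  by rewrite ltn_ord.
by rewrite ltnNge leq_addr /= addKn.
Qed.

Definition adherent C y := forall e, 0 < e -> exists2 c, C c & `|y - c| <= e.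

Definition norm_closed C := forall y, adherent C y -> C y.

Lemma not_adherentP C y : ~ adherent C y ->
  exists2 d, 0 < d & forall c, C c -> d < `|y - c|.
Proof.
move=> nCy; apply: contrapT => nd; apply: nCy => e e0.
apply: contrapT => ne; apply: nd; exists e => // c Cc.
by rewrite ltNge; apply/negP => ce; apply: ne; exists c.
Qed.

Lemma norm_add_line_ge C u d c b : is_subspace C ->
  (forall c, C c -> d < `|u - c|) -> C c -> `|b| * d <= `|c + b *: u|.
Proof.
move=> hC ud Cc; have [->|b0] := eqVneq b 0; first by rewrite normr0 mul0r.
have -> : c + b *: u = b *: (u - (- b^-1) *: c).
  by rewrite scalerBr scalerA mulrN mulfV // scaleN1r opprK addrC.
rewrite normrZ ler_wpM2l //; apply: ltW; apply: ud; exact: subspaceZ.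
Qed.

Section FarLine.
Variables (C : set V) (u : V) (d : R).
Hypotheses (hC : is_subspace C) (d0 : 0 < d) (ud : forall c, C c -> d < `|u - c|).

Lemma add_line_coef_close y c c' b b' e e' : C c -> C c' ->
  `|y - (c + b *: u)| <= e -> `|y - (c' + b' *: u)| <= e' ->
  `|b - b'| <= e / d + e' / d.
Proof.
move=> Cc Cc' ye ye'; rewrite -mulrDl ler_pdivlMr //.
apply: le_trans (norm_add_line_ge (b - b') hC ud (subspaceB hC Cc Cc')) _.
have -> : c - c' + (b - b') *: u = (y - (c' + b' *: u)) - (y - (c + b *: u)).
  by rewrite scalerBl opprB [RHS]addrC [RHS]addrA subrK opprD addrACA.
by apply: le_trans (ler_normB _ _) _; rewrite addrC lerD.
Qed.

Lemma add_line_coef_limit y : adherent (add_line C u) y ->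
  exists al, forall c b e, C c ->
    `|y - (c + b *: u)| <= e -> `|b - al| <= e / d.
Proof.
move=> yad; pose A := [set r | exists c (b e : R), C c /\
  `|y - (c + b *: u)| <= e /\ r = b - e / d].
have [_ [c1 [b1 [Cc1 ->]]] y1] := yad 1 ltr01.
have A0 : A !=set0 by exists (b1 - 1 / d), c1, b1, 1.
have Aub : forall c b e, C c -> `|y - (c + b *: u)| <= e -> ubound A (b + e / d).
  move=> c b e Cc ye _ [c' [b' [e' [Cc' [ye' ->]]]]].
  have := add_line_coef_close Cc' Cc ye' ye; rewrite ler_norml => /andP[_].
  by lra.
exists (sup A) => c b e Cc ye; rewrite distrC ler_distl; apply/andP; split.
  apply: ub_le_sup; last by exists c, b, e.
  by exists (b1 + 1 / d); apply: Aub Cc1 y1.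
by apply: ge_sup => //; apply: Aub Cc ye.
Qed.

End FarLine.

Lemma add_line_closed C u : is_subspace C -> norm_closed C ->
  norm_closed (add_line C u).
Proof.
move=> hC Ccl y yad.
have [uad|/not_adherentP [d d0 ud]] := pselect (adherent C u).
  exists y, 0; split; last by rewrite scale0r addr0.
  apply: Ccl => e e0; have e20 : 0 < e / 2 by rewrite divr_gt0.
  have [_ [c [b [Cc ->]]] ye] := yad _ e20.
  have b10 : 0 < `|b| + 1 by rewrite ltr_wpDl.
  have [c0 Cc0 uc0] := uad _ (divr_gt0 e20 b10).
  exists (c + b *: c0); first by apply: subspaceD => //; apply: subspaceZ.
  have -> : y - (c + b *: c0) = (y - (c + b *: u)) + b *: (u - c0).
    by rewrite scalerBr !opprD !addrA subrK.
  apply: le_trans (ler_normD _ _) _; rewrite normrZ.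
  have : `|b| * `|u - c0| <= e / 2.
    apply: le_trans (ler_wpM2l (normr_ge0 b) uc0) _.
    by rewrite mulrA ler_pdivrMr //; have := normr_ge0 b; nra.
  by lra.
have [al Hal] := add_line_coef_limit hC d0 ud yad.
exists (y - al *: u), al; split; last by rewrite subrK.
apply: Ccl => e e0; have ud0 : 0 < 1 + `|u| / d.
  have : 0 <= `|u| / d by rewrite divr_ge0 // ltW.
  by lra.
set e1 := e / (1 + `|u| / d).
have [_ [c [b [Cc ->]]] ye] := yad e1 (divr_gt0 e0 ud0).
exists c => //.
have -> : y - al *: u - c = (y - (c + b *: u)) + (b - al) *: u.
  by rewrite scalerBl opprD !addrA subrK addrAC.
apply: le_trans (ler_normD _ _) _; rewrite normrZ.
have -> : e = e1 + e1 / d * `|u|.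
  by rewrite /e1; field; rewrite gt_eqF // gt_eqF // ltr_wpDr.
by rewrite lerD // ler_wpM2r // (Hal c).
Qed.

Lemma vspan_closed m v : norm_closed (vspan m v).
Proof.
elim: m => [|m IH].
  rewrite vspan0 => y yad; apply/normr0_eq0/eqP; rewrite eq_le normr_ge0 andbT.
  by apply/ler_addgt0Pr => e e0; have [_ -> ye] := yad e e0; rewrite add0r -[y]subr0.
by rewrite vspan_recr; apply: add_line_closed => //; apply: vspan_subspace.
Qed.

Lemma riesz_lemma C W w0 : is_subspace C -> norm_closed C -> is_subspace W ->
  C `<=` W -> W w0 -> ~ C w0 ->
  exists w, [/\ W w, `|w| = 1 & forall c, C c -> 1 / 2 < `|w - c|].
Proof.
move=> hC Ccl hW CW Ww0 nCw0.
have /not_adherentP [e e0 He] : ~ adherent C w0 by move=> /Ccl.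
pose E := [set `|w0 - c| | c in C].
have E0 : E !=set0 by exists `|w0 - 0|, 0 => //; apply: subspace0.
have Elb : has_lbound E by exists 0 => _ [c _ <-].
have D0 : 0 < inf E.
  by apply: lt_le_trans e0 _; apply: lb_le_inf => // _ [c Cc <-]; apply/ltW/He.
have [_ [c0 Cc0 <-] N2D] : exists2 x, E x & x < 2 * inf E.
  by apply: inf_lt => //; lra.
set N := `|w0 - c0| in N2D *.
have N0 : 0 < N by apply: lt_le_trans D0 _; apply: ge_inf => //; exists c0.
exists (N^-1 *: (w0 - c0)); split.
- by apply: subspaceZ => //; apply: subspaceB => //; apply: CW.
- by rewrite normrZ normfV normr_id mulVf ?gt_eqF.
move=> c Cc; have Nc : C (c0 + N *: c) by apply: subspaceD => //; apply: subspaceZ.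
have -> : N^-1 *: (w0 - c0) - c = N^-1 *: (w0 - (c0 + N *: c)).
  by rewrite opprD addrA [RHS]scalerBr scalerA mulVf ?gt_eqF // scale1r.
rewrite normrZ normfV (gtr0_norm N0) [_ * `|_|]mulrC ltr_pdivlMr //.
have : inf E <= `|w0 - (c0 + N *: c)| by apply: ge_inf => //; exists (c0 + N *: c).
by lra.
Qed.

Lemma finite_codimP Z : finite_codim Z ->
  exists n (v : nat -> V), forall y, exists2 z, Z z & vspan n v (y - z).
Proof.
move=> [_ [n [v Hv]]]; pose ext T (x0 : T) (h : 'I_n -> T) k :=
  if @insub nat (fun k => (k < n)%N) 'I_n k is Some i then h i else x0.
exists n, (ext _ 0 v) => y; have [a [z [Zz ->]]] := Hv y.
exists z => //; exists (ext _ 0 a); rewrite [z + _]addrC addrK.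
by apply: eq_bigr => i _; rewrite /ext valK.
Qed.

Section InfiniteDimensional.
Hypothesis hV : infinite_dimensional V.

Lemma not_vspan m v : exists y, ~ vspan m v y.
Proof.
have [y ny] := hV (fun i : 'I_m => v i).
by exists y => -[a ya]; apply: ny; exists (fun i => a i).
Qed.

Lemma finite_codim_not_sub_vspan Z m v : finite_codim Z ->
  exists2 z, Z z & ~ vspan m v z.
Proof.
move=> /finite_codimP [n [v' Zv']]; apply: contrapT => Zv.
have [x nx] := not_vspan (m + n) (fun k => if (k < m)%N then v k else v' (k - m)%N).
have [z Zz xz] := Zv' x; apply: nx; rewrite -(subrK z x) addrC.
by apply: vspan_cat _ xz; apply: contrapT => nz; apply: Zv; exists z.
Qed.

Lemma finite_codim_unit Z : finite_codim Z -> exists2 z, Z z & `|z| = 1.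
Proof.
move=> hZ; have [z Zz] := finite_codim_not_sub_vspan 0 (fun=> 0) hZ.
rewrite vspan0 => /eqP z0; exists (`|z|^-1 *: z); first exact: subspaceZ hZ.1 Zz.
by rewrite normrZ normfV normr_id mulVf // normr_eq0.
Qed.

Lemma separated_unit_seq W : finite_codim W ->
  exists w : nat -> V, (forall k, W (w k) /\ `|w k| = 1) /\
    (forall k l, k <> l -> 1 / 2 < `|w k - w l|).
Proof.
move=> hW; have hWs := hW.1.
have step (s : seq V) : exists w,
    (forall i, (i < size s)%N -> W (nth 0 s i)) ->
    [/\ W w, `|w| = 1 & forall c, vspan (size s) (nth 0 s) c -> 1 / 2 < `|w - c|].
  have [Ws|nWs] := pselect (forall i, (i < size s)%N -> W (nth 0 s i)).
    have [w0 Ww0 nw0] := finite_codim_not_sub_vspan (size s) (nth 0 s) hW.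
    have [w Hw] := riesz_lemma (vspan_subspace _ _) (@vspan_closed (size s) (nth 0 s))
      hWs (vspan_sub hWs Ws) Ww0 nw0.
    by exists w.
  by exists 0 => /nWs.
have [nx Hnx] := choice step.
pose ws n := iter n (fun s => rcons s (nx s)) [::].
have size_ws n : size (ws n) = n by elim: n => //= n IH; rewrite size_rcons IH.
have nth_ws n i : (i < n)%N -> nth 0 (ws n) i = nx (ws i).
  elim: n => // n IH; rewrite /= nth_rcons size_ws ltnS leq_eqVlt.
  by case/orP=> [/eqP ->|lt]; rewrite ?ltnn ?eqxx // lt IH.
have Hws k : forall i, (i < size (ws k))%N -> W (nth 0 (ws k) i).
  elim/ltn_ind: k => k IH i; rewrite size_ws => ik; rewrite nth_ws //.
  by have [] := Hnx (ws i) (IH i ik).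
exists (fun k => nx (ws k)); split=> [k|k l kl].
  by have [] := Hnx (ws k) (Hws k).
suff sep_lt i j : (j < i)%N -> 1 / 2 < `|nx (ws i) - nx (ws j)|.
  case: (ltngtP l k) => [lk|kl'|e]; first exact: sep_lt.
    by rewrite distrC; apply: sep_lt.
  by case: kl.
move=> ji; have [_ _] := Hnx (ws i) (Hws i); apply.
by rewrite -(nth_ws i) //; apply: vspan_mem; rewrite size_ws.
Qed.

End InfiniteDimensional.

End Subspaces.

(** * Pigeonhole modulo a finite-codimensional subspace *)

Section Pigeonhole.
Variable R : realType.

Definition cofinal (I : set nat) := forall N, exists2 k, (N <= k)%N & I k.

Lemma cofinal_pigeon_nat N (h : nat -> nat) I : cofinal I ->
  (forall k, I k -> (h k <= N)%N) -> exists j, cofinal [set k | I k /\ h k = j].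
Proof.
elim: N I => [|N IH] I hI hN.
  exists 0%N => M; have [k Mk Ik] := hI M; exists k => //; split => //.
  by apply/eqP; rewrite -leqn0; apply: hN.
have [|] := pselect (cofinal [set k | I k /\ h k = N.+1]); first by exists N.+1.
move=> ncof; have [M nM] : exists M, forall k, (M <= k)%N -> I k -> h k <> N.+1.
  apply: contrapT => nM; apply: ncof => M; apply: contrapT => nk; apply: nM.
  by exists M => k Mk Ik hk; apply: nk; exists k.
have [||j hj] := IH [set k | (M <= k)%N /\ I k].
- move=> P; have [k Pk Ik] := hI (maxn P M); rewrite geq_max in Pk.
  by case/andP: Pk => Pk Mk; exists k.
- move=> k [Mk Ik]; have := hN k Ik; rewrite leq_eqVlt ltnS => /orP[/eqP hk|//].
  by case: (nM k).
by exists j => P; have [k Pk [[_ Ik] hk]] := hj P; exists k.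
Qed.

Lemma cofinal_pigeon_real I (b : nat -> R) A del : cofinal I ->
  (forall k, I k -> `|b k| <= A) -> 0 < del ->
  exists I', [/\ I' `<=` I, cofinal I' &
    forall k l, I' k -> I' l -> `|b k - b l| <= del].
Proof.
move=> hI hA del0; pose x k := (b k + A) / del.
have x0 k : I k -> 0 <= x k.
  move=> Ik; apply: divr_ge0; last exact: ltW.
  by have := hA k Ik; rewrite ler_norml => /andP[? ?]; lra.
have [|j hj] :=
  @cofinal_pigeon_nat (Num.truncn ((A + A) / del)) (fun k => Num.truncn (x k)) I hI.
  move=> k Ik; apply: le_truncn; apply: ler_wpM2r; first by rewrite invr_ge0 ltW.
  by have := hA k Ik; rewrite ler_norml => /andP[? ?]; lra.
exists [set k | I k /\ Num.truncn (x k) = j]; split => [k []//|//|k l [Ik hk] [Il hl]].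
have : `|x k - x l| <= 1.
  have := truncn_itv (x0 _ Ik); have := truncn_itv (x0 _ Il); rewrite hk hl.
  have -> : (j.+1%:R : R) = j%:R + 1 by rewrite -addn1 natrD.
  by move=> /andP[? ?] /andP[? ?]; rewrite ler_norml; apply/andP; split; lra.
rewrite /x -mulrBl [b l + A]addrC addrKA normrM normfV (gtr0_norm del0).
by rewrite ler_pdivrMr // mul1r.
Qed.

End Pigeonhole.

Section CofinalNearSubspace.
Variables (R : realType) (V : normedModType R).
Variables (u : nat -> V) (B : R).
Implicit Types (C : set V) (I : set nat).

Definition near_diffs C I eps := forall k l, I k -> I l ->
  exists2 c, C c & `|u k - u l - c| <= eps.

Lemma near_diffs_add_line C v I eps : is_subspace C -> cofinal I ->
  (forall k, I k -> `|u k| <= B) -> 0 < eps ->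
  near_diffs (add_line C v) I eps ->
  exists I', [/\ I' `<=` I, cofinal I' & near_diffs C I' (3 * eps)].
Proof.
move=> hC hI uB eps0 hnear.
(* Either v is adherent to C, and every c + b v is close to C, or v is at
   positive distance from C, which bounds the coefficients along v so that
   they can be pigeonholed. *)
have [vad|/not_adherentP [d d0 vd]] := pselect (adherent C v).
  exists I; split => // k l Ik Il; have [_ [c [b [Cc ->]]] hkl] := hnear k l Ik Il.
  have b10 : 0 < `|b| + 1 by rewrite ltr_wpDl.
  have [c0 Cc0 vc0] := vad _ (divr_gt0 eps0 b10).
  exists (c + b *: c0); first by apply: subspaceD => //; apply: subspaceZ.
  have -> : u k - u l - (c + b *: c0) = (u k - u l - (c + b *: v)) + b *: (v - c0).
    by rewrite scalerBr !opprD !addrA subrK.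
  apply: le_trans (ler_normD _ _) _; rewrite normrZ.
  have : `|b| * `|v - c0| <= eps.
    apply: le_trans (ler_wpM2l (normr_ge0 b) vc0) _.
    by rewrite mulrA ler_pdivrMr //; have := normr_ge0 b; nra.
  by lra.
have [k0 _ Ik0] := hI 0%N.
have pick k : exists p : V * R, I k ->
    C p.1 /\ `|u k - u k0 - (p.1 + p.2 *: v)| <= eps.
  have [Ik|nIk] := pselect (I k); last by exists (0, 0).
  by have [_ [c [b [Cc ->]]] hk] := hnear k k0 Ik Ik0; exists (c, b).
have [cb Hcb] := choice pick.
have cbB k : I k -> `|(cb k).2| <= (B + B + eps) / d.
  move=> Ik; have [Cc hk] := Hcb k Ik; rewrite ler_pdivlMr //.
  apply: le_trans (norm_add_line_ge _ hC vd Cc) _.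
  have := ler_normB (u k - u k0) (u k - u k0 - ((cb k).1 + (cb k).2 *: v)).
  rewrite opprB addrC subrK => h; apply: le_trans h _.
  have := ler_normB (u k) (u k0); have := uB k Ik; have := uB k0 Ik0; lra.
have v10 : 0 < `|v| + 1 by rewrite ltr_wpDl.
have [I' [I'I hI' cb_close]] := cofinal_pigeon_real hI cbB (divr_gt0 eps0 v10).
exists I'; split => // k l I'k I'l.
have [Cck hk] := Hcb k (I'I k I'k); have [Ccl hl] := Hcb l (I'I l I'l).
exists ((cb k).1 - (cb l).1); first exact: subspaceB.
have -> : u k - u l = (u k - u k0) - (u l - u k0) by rewrite subrACA subrr subr0.
rewrite (subrBB_residual _ _ _ _ ((cb k).2 *: v) ((cb l).2 *: v)) -scalerBl.
apply: le_trans (ler_normD _ _) _; rewrite normrZ.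
have : `|(cb k).2 - (cb l).2| * `|v| <= eps.
  apply: le_trans (ler_wpM2r (normr_ge0 v) (cb_close k l I'k I'l)) _.
  by rewrite mulrAC ler_pdivrMr // ler_pM2l // lerDl.
have := ler_normB (u k - u k0 - ((cb k).1 + (cb k).2 *: v))
  (u l - u k0 - ((cb l).1 + (cb l).2 *: v)).
lra.
Qed.

Lemma near_diffs_span (v : nat -> V) m C I eps : is_subspace C -> cofinal I ->
  (forall k, I k -> `|u k| <= B) -> 0 < eps ->
  (forall k, I k -> exists2 c, C c & vspan m v (u k - c)) ->
  exists I', [/\ I' `<=` I, cofinal I' & near_diffs C I' eps].
Proof.
elim: m C I eps => [|m IH] C I eps hC hI uB eps0 uCv.
  exists I; split => // k l Ik Il.
  have [ck Cck] := uCv k Ik; have [cl Ccl] := uCv l Il; rewrite vspan0 => ul ukl.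
  exists (ck - cl); first exact: subspaceB.
  by rewrite subrACA ukl ul subr0 normr0 ltW.
have uCv' k : I k -> exists2 c, add_line C (v m) c & vspan m v (u k - c).
  move=> Ik; have [c Cc] := uCv k Ik; rewrite vspan_recr => -[s [b [vs ukc]]].
  exists (c + b *: v m); first by exists c, b.
  by rewrite opprD addrA ukc addrK.
have eps30 : 0 < eps / 3 by rewrite divr_gt0.
have [I1 [I1I hI1 near1]] := IH _ _ _ (add_line_subspace _ hC) hI uB eps30 uCv'.
have [I' [I'I1 hI' near']] :=
  near_diffs_add_line hC hI1 (fun k I1k => uB k (I1I k I1k)) eps30 near1.
exists I'; split => // [k /I'I1 /I1I //|k l I'k I'l].
have [c Cc ukl] := near' k l I'k I'l; exists c => //.
by move: ukl; rewrite mulrC divfK.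
Qed.

End CofinalNearSubspace.

Lemma finite_codim_close_pair (R : realType) (V : normedModType R) (Z : set V)
    (u : nat -> V) B eps : finite_codim Z -> (forall k, `|u k| <= B) -> 0 < eps ->
  exists k l, k <> l /\ exists2 z, Z z & `|u k - u l - z| <= eps.
Proof.
move=> hZ uB eps0; have [n [v Zv]] := finite_codimP hZ.
have hT : cofinal setT by move=> N; exists N.
have [I' [_ hI' near']] :=
  near_diffs_span hZ.1 hT (fun k _ => uB k) eps0 (fun k _ => Zv (u k)).
have [k _ I'k] := hI' 0%N; have [l kl I'l] := hI' k.+1.
exists k, l; split; first by move=> e; rewrite e ltnn in kl.
exact: near' k l I'k I'l.
Qed.

(** * The asymptotic moduli *)

Section SupInf.
Variable R : realType.
Implicit Types E : set R.

Lemma sup_ge0 E : (forall x, E x -> 0 <= x) -> 0 <= sup E.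
Proof.
move=> E0; have [[[x Ex] Eub]|nE] := pselect (has_sup E); last by rewrite sup_out.
exact: le_trans (E0 x Ex) (ub_le_sup Eub Ex).
Qed.

Lemma sup_le_ge0 E b : 0 <= b -> ubound E b -> sup E <= b.
Proof.
move=> b0 Eb; have [E0|nE] := pselect (E !=set0); first exact: ge_sup.
by rewrite (_ : E = set0) ?sup0 //; apply/seteqP; split => // x Ex; apply: nE; exists x.
Qed.

Lemma inf_ge0 E : (forall x, E x -> 0 <= x) -> 0 <= inf E.
Proof.
move=> E0; have [En|nE] := pselect (E !=set0); first exact: lb_le_inf.
by rewrite (_ : E = set0) ?inf0 //; apply/seteqP; split => // x Ex; apply: nE; exists x.
Qed.

End SupInf.

Section Moduli.
Variable R : realType.

Lemma finite_codimT (V : normedModType R) : finite_codim [set: V].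
Proof.
split; first by split.
by exists 0%N, (fun=> 0) => y; exists (fun=> 0), y; rewrite big_ord0 addr0.
Qed.

Lemma rho_bar_approx (Y : normedModType R) t eta (y : Y) : 0 <= t -> 0 < eta ->
  `|y| = 1 -> exists2 W, finite_codim W &
    forall w, W w -> `|w| = 1 -> `|y + t *: w| <= 1 + rho_bar Y t + eta.
Proof.
move=> t0 eta0 y1; pose G (y : Y) Z := [set `|y + t *: z| | z in sphere_of Z].
have G_ub y' Z : `|y'| = 1 -> ubound (G y' Z) (1 + t).
  move=> y'1 _ [z [_ z1] <-]; apply: le_trans (ler_normD _ _) _.
  by rewrite normrZ z1 y'1 mulr1 ger0_norm.
pose F y' := [set sup (G y' Z) | Z in [set Z : set Y | finite_codim Z]].
have F0 y' x : F y' x -> 0 <= x by move=> [Z _ <-]; apply: sup_ge0 => _ [z _ <-].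
have FT y' : F y' (sup (G y' setT)) by exists setT => //; apply: finite_codimT.
have rho_ub : ubound [set inf (F y') - 1 | y' in sphere_of [set: Y]] t.
  move=> _ [y' [_ y'1] <-]; rewrite lerBlDl.
  apply: le_trans (ge_inf (ex_intro _ 0 (F0 y')) (FT y')) _.
  by apply: sup_le_ge0 (G_ub _ _ y'1); rewrite addr_ge0.
have rho_y : inf (F y) - 1 <= rho_bar Y t by apply: ub_le_sup; [exists t|exists y].
have [_ [W hW <-] GW] : exists2 x, F y x & x < 1 + rho_bar Y t + eta.
  by apply: inf_lt; [exists (sup (G y setT)); apply: FT|lra].
exists W => // w Ww w1; apply: le_trans (ltW GW).
by apply: ub_le_sup; [exists (1 + t); apply: G_ub|exists w].
Qed.

Lemma rho_bar_ge0 (Y : normedModType R) t : infinite_dimensional Y -> 0 <= t ->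
  0 <= rho_bar Y t.
Proof.
move=> hY t0; have [y _ y1] := finite_codim_unit hY (finite_codimT Y).
apply/ler_addgt0Pr => e e0; have [W hW yW] := rho_bar_approx t0 e0 y1.
have [w Ww w1] := finite_codim_unit hY hW.
have := yW w Ww w1; have := yW (- w) (subspaceN hW.1 Ww); rewrite normrN => /(_ w1).
have := ler_normD (y + t *: w) (y + t *: - w).
rewrite scalerN addrACA subrr addr0 -mulr2n -scaler_nat normrZ y1 mulr1.
by rewrite ger0_norm //; lra.
Qed.

Lemma delta_bar_le (X : normedModType R) s B (x : X) : 0 <= s -> `|x| = 1 ->
  (forall Z, finite_codim Z -> exists2 z, Z z & `|z| = 1 /\ `|x + s *: z| <= B) ->
  delta_bar X s <= B - 1.
Proof.
move=> s0 x1 xZ; pose G (x' : X) Z := [set `|x' + s *: z| | z in sphere_of Z].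
pose F x' := [set inf (G x' Z) | Z in [set Z : set X | finite_codim Z]].
have F0 x' y : F x' y -> 0 <= y by move=> [Z _ <-]; apply: inf_ge0 => _ [z _ <-].
have FB : sup (F x) <= B.
  apply: ge_sup; first by exists (inf (G x setT)), setT => //; apply: finite_codimT.
  move=> _ [Z hZ <-]; have [z Zz [z1 xz]] := xZ Z hZ.
  by apply: le_trans xz; apply: ge_inf; [exists 0 => _ [? _ <-]|exists z].
have : delta_bar X s <= sup (F x) - 1.
  apply: ge_inf; last by exists x.
  by exists (-1) => _ [x' _ <-]; have := sup_ge0 (F0 x'); lra.
by lra.
Qed.

Lemma delta_bar0_le0 (X : normedModType R) : infinite_dimensional X ->
  delta_bar X 0 <= 0.
Proof.
move=> hX; have [x _ x1] := finite_codim_unit hX (finite_codimT X).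
rewrite -[b in _ <= b](subrr 1); apply: (delta_bar_le _ x1) => // Z hZ.
have [z Zz z1] := finite_codim_unit hX hZ.
by exists z; rewrite // scale0r addr0 x1.
Qed.

Lemma delta_bar_le_convex (X : normedModType R) s B (x : X) : 0 < s -> x != 0 ->
  1 <= B -> (forall Z, finite_codim Z ->
    exists2 z, Z z & s * `|x| <= `|z| /\ `|x + z| <= B * `|x|) ->
  delta_bar X s <= B - 1.
Proof.
move=> s0 x0 B1 xZ; have nx0 : 0 < `|x| by rewrite normr_gt0.
apply: (@delta_bar_le _ _ _ (`|x|^-1 *: x)) => [||Z hZ]; first exact: ltW.
  by rewrite normrZ normfV normr_id mulVf // gt_eqF.
have [z0 Zz0 [z0_ge xz0]] := xZ Z hZ.
have nz0 : 0 < `|z0| by apply: lt_le_trans z0_ge; rewrite mulr_gt0.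
exists (`|z0|^-1 *: z0); first exact: subspaceZ hZ.1 Zz0.
split; first by rewrite normrZ normfV normr_id mulVf // gt_eqF.
pose lam := s * `|x| / `|z0|.
have lam0 : 0 <= lam by rewrite divr_ge0 // ltW // mulr_gt0.
have lam1 : lam <= 1 by rewrite ler_pdivrMr // mul1r.
have -> : `|x|^-1 *: x + s *: (`|z0|^-1 *: z0) =
    `|x|^-1 *: ((1 - lam) *: x + lam *: (x + z0)).
  have -> : (1 - lam) *: x + lam *: (x + z0) = x + lam *: z0.
    by rewrite scalerDr addrA -scalerDl subrK scale1r.
  rewrite scalerDr !scalerA; congr (_ + _ *: _).
  by rewrite /lam; field; rewrite !gt_eqF.
clearbody lam; rewrite normrZ normfV normr_id mulrC ler_pdivrMr //.
apply: le_trans (ler_normD _ _) _.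
rewrite !normrZ (ger0_norm lam0) ger0_norm ?subr_ge0 //.
have := ler_wpM2l lam0 xz0.
have : 0 <= (1 - lam) * (B - 1) * `|x| by rewrite !mulr_ge0 ?subr_ge0 // ltW.
nra.
Qed.

End Moduli.

Section Midpoints.
Variable R : realType.

Lemma finite_codim_near_midpoint (X : normedModType R) (a b : X) (e : nat -> X)
    R1 D Z : finite_codim Z ->
  (forall k, `|e k - a| <= R1 /\ `|e k - b| <= R1) ->
  (forall k l, k <> l -> D <= `|e k - e l|) ->
  exists2 z, Z z & (D - 1) / 2 <= `|z| /\ `|2^-1 *: (a - b) + z| <= R1 + 1 / 2.
Proof.
move=> hZ eab esep.
have [k [l [kl [z1 Zz1 klz1]]]] :=
  finite_codim_close_pair hZ (fun k => (eab k).1) (@ltr01 R).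
rewrite subrACA subrr subr0 in klz1.
exists (- (2^-1 *: z1)); first by apply: subspaceN hZ.1 _; apply: subspaceZ hZ.1 Zz1.
split.
  rewrite normrN normrZ ger0_norm ?invr_ge0 // [2^-1 * _]mulrC ler_pM2r ?invr_gt0 //.
  rewrite lerBlDr.
  apply: le_trans (esep k l kl) _; rewrite -[e k - e l](subrK z1).
  by apply: le_trans (ler_normD _ _) _; rewrite addrC lerD2l.
rewrite -scalerBr normrZ ger0_norm ?invr_ge0 // (subr_telescope _ _ (e k) (e l)).
have := ler_normD (a - e k + (e k - e l - z1)) (e l - b).
have := ler_normD (a - e k) (e k - e l - z1).
have := (eab k).1; have := (eab l).2; rewrite !(distrC (e _)) => ? ? ? ?; lra.
Qed.

Lemma delta_bar_le_separated (X : normedModType R) (a b : X) (e : nat -> X)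
    R1 D s B : 0 < s -> a != b ->
  (forall k, `|e k - a| <= R1 /\ `|e k - b| <= R1) ->
  (forall k l, k <> l -> D <= `|e k - e l|) ->
  s * `|a - b| <= D - 1 -> 2 * R1 + 1 <= B * `|a - b| ->
  delta_bar X s <= B - 1.
Proof.
move=> s0 ab eab esep sD R1B; have ab0 : 0 < `|a - b| by rewrite normr_gt0 subr_eq0.
have xE : `|2^-1 *: (a - b)| = `|a - b| / 2.
  by rewrite normrZ ger0_norm ?invr_ge0 // mulrC.
apply: (delta_bar_le_convex (x := 2^-1 *: (a - b)) s0).
- by rewrite scaler_eq0 negb_or invr_eq0 pnatr_eq0 subr_eq0 ab.
- have : `|a - b| <= 2 * R1.
    have -> : a - b = (e 0%N - b) - (e 0%N - a) by rewrite subrACA subrr sub0r opprB.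
    by apply: le_trans (ler_normB _ _) _; have := eab 0%N; rewrite !(distrC (e _)); lra.
  by move=> abR1; nra.
move=> Z hZ; have [z Zz [zD xz]] := finite_codim_near_midpoint hZ eab esep.
exists z => //; rewrite xE; split; first by lra.
by apply: le_trans xz _; lra.
Qed.

Lemma rho_bar_midpoints (Y : normedModType R) (p q : Y) t eta :
  infinite_dimensional Y -> 0 <= t -> 0 < eta ->
  exists m : nat -> Y,
    (forall k, `|m k - p| <= `|q - p| / 2 * (1 + rho_bar Y t + eta) /\
               `|m k - q| <= `|q - p| / 2 * (1 + rho_bar Y t + eta)) /\
    (forall k l, k <> l -> `|q - p| * t / 4 <= `|m k - m l|).
Proof.
move=> hY t0 eta0; set r := `|q - p|.
have [y y1 qE] : exists2 y : Y, `|y| = 1 & q = p + r *: y.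
  have [qp0|qp0] := eqVneq (q - p) 0.
    have [y _ y1] := finite_codim_unit hY (finite_codimT Y).
    exists y => //; rewrite /r qp0 normr0 scale0r addr0.
    by apply/eqP; rewrite -subr_eq0 qp0.
  exists (r^-1 *: (q - p)); first by rewrite normrZ normfV normr_id mulVf ?normr_eq0.
  by rewrite scalerA mulfV ?normr_eq0 // scale1r subrKC.
have [W hW yW] := rho_bar_approx t0 eta0 y1.
have [w [Ww wsep]] := separated_unit_seq hY hW.
(* m_k - p = r/2 (y + t w_k) and q - m_k = r/2 (y + t (- w_k)). *)
have r0 : 0 <= r / 2 by rewrite divr_ge0 /r.
exists (fun k => p + (r / 2) *: (y + t *: w k)); split => [k|k l kl].
  have [Wk wk1] := Ww k; split.
    by rewrite addrC addKr normrZ ger0_norm // ler_wpM2l // yW.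
  have -> : p + (r / 2) *: (y + t *: w k) - q = - ((r / 2) *: (y + t *: - w k)).
    rewrite qE [p + _]addrC addrKA.
    have -> : r *: y = (r / 2) *: (y + y) by rewrite scalerDr -scalerDl -splitr.
    rewrite -scalerBr [y + _]addrC addrKA -scalerN.
    by rewrite opprD scalerN opprK addrC.
  rewrite normrN normrZ ger0_norm // ler_wpM2l // yW ?normrN //.
  exact: subspaceN hW.1 Wk.
rewrite [p + _]addrC addrKA -scalerBr [y + _]addrC addrKA -scalerBr !normrZ.
rewrite normr_id (ger0_norm t0) ger0_norm ?invr_ge0 // mulrA.
have -> : r * t / 4 = r / 2 * t * (1 / 2) by field.
apply: ler_wpM2l; first by rewrite mulr_ge0.
exact/ltW/wsep.
Qed.

End Midpoints.

(** * Coarse inverses at large scale *)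

Section AsymptoticConstants.
Variables (R : realType) (X Y : normedModType R) (S : set X) (f : X -> Y).

Lemma Lip_inf_fine_ge0 : 0 <= fine (Lip_inf S f).
Proof.
case E: (Lip_inf S f) => [r| |] //=; rewrite leNgt; apply/negP => r0.
have /ereal_inf_lt [_ [s s0 <-] Hs] : (Lip_inf S f < 0%:E)%E by rewrite E lte_fin.
have [[p Sp]|nS] := pselect (exists p : X * X, S p.1 /\ S p.2 /\ s <= `|p.1 - p.2|).
  have : ((`|f p.1 - f p.2| / `|p.1 - p.2|)%:E <= Lip_s S f s)%E.
    by apply: ereal_sup_ubound; exists p.
  by move=> /le_lt_trans /(_ Hs); rewrite lte_fin ltNge divr_ge0.
have : (Lip_inf S f <= Lip_s S f s)%E by apply: ereal_inf_lbound; exists s.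
suff -> : Lip_s S f s = -oo%E by rewrite E leeNy_eq.
rewrite /Lip_s; suff -> : [set (`|f p.1 - f p.2| / `|p.1 - p.2|)%:E
          | p in [set p : X * X | S p.1 /\ S p.2 /\ s <= `|p.1 - p.2|]] = set0.
  exact: ereal_sup0.
by apply/seteqP; split => // x [p Sp _]; apply: nS; exists p.
Qed.

Lemma c_inf_fine_ge0 K : 0 <= fine (c_inf S f K).
Proof.
case E: (c_inf S f K) => [r| |] //=; rewrite leNgt; apply/negP => r0.
have /ereal_inf_lt [_ [d Kd <-]] : (c_inf S f K < 0%:E)%E by rewrite E lte_fin.
by move=> /ereal_inf_lt [_ [c [c0 _] <-]]; rewrite lte_fin ltNge ltW.
Qed.

Lemma Lip_inf_lt L : 0 < fine (Lip_inf S f) -> fine (Lip_inf S f) < L ->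
  exists2 s0, 0 < s0 & forall p q, S p -> S q -> s0 <= `|p - q| ->
    `|f p - f q| <= L * `|p - q|.
Proof.
case E: (Lip_inf S f) => [r| |] //=; rewrite ?ltxx // => r0 rL.
have /ereal_inf_lt [_ [s0 s00 <-] Hs] : (Lip_inf S f < L%:E)%E by rewrite E lte_fin.
exists s0 => // p q Sp Sq s0pq.
have : ((`|f p - f q| / `|p - q|)%:E <= Lip_s S f s0)%E.
  by apply: ereal_sup_ubound; exists (p, q).
move=> /le_lt_trans /(_ Hs); rewrite lte_fin ltr_pdivrMr; first exact: ltW.
exact: lt_le_trans s0pq.
Qed.

Lemma c_inf_lt K c : 0 < fine (c_inf S f K) -> fine (c_inf S f K) < c ->
  exists d0 c0, [/\ K < d0, c_admissible S f K d0 c0 & c0 < c].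
Proof.
case E: (c_inf S f K) => [r| |] //=; rewrite ?ltxx // => r0 rc.
have /ereal_inf_lt [_ [d Kd <-]] : (c_inf S f K < c%:E)%E by rewrite E lte_fin.
by move=> /ereal_inf_lt [_ [c0 hc0 <-]]; rewrite lte_fin => c0c; exists d, c0.
Qed.

Lemma c_inf_gt K c d : 0 < fine (c_inf S f K) -> c < fine (c_inf S f K) ->
  K < d -> ~ c_admissible S f K d c.
Proof.
case E: (c_inf S f K) => [r| |] //=; rewrite ?ltxx // => r0 cr Kd hc.
have : (c_inf S f K <= c%:E)%E.
  apply: le_trans (_ : c_d S f K d <= _)%E; apply: ereal_inf_lbound; first by exists d.
  by exists c.
by rewrite E lee_fin leNgt cr.
Qed.

End AsymptoticConstants.

Lemma near_pinfty_affine_le (R : realType) (a b c : R) : b < c ->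
  \forall r \near +oo, a + b * r <= c * r.
Proof.
move=> bc; have cb0 : 0 < c - b by rewrite subr_gt0.
near=> r; rewrite -lerBrDr -mulrBl mulrC -(ler_pdivrMr _ _ cb0).
near: r; apply: nbhs_pinfty_ge; exact: num_real.
Unshelve. all: by end_near.
Qed.

Lemma near_pinfty_scale_conditions (R : realType)
    (d0 om K L s c0 C0 t P B c2 : R) :
  0 < P -> 0 < t -> L * s * c0 < t / 4 -> c0 * P < B * c2 ->
  \forall r \near +oo, [/\ d0 <= r / 2 * P, om + 2 * K < r * t / 4,
    L * s * (c0 * r + C0) + 2 * K + L <= r * t / 4 &
    2 * (c0 * (r / 2 * P + K) + C0) + 1 <= B * (c2 * r)].
Proof.
move=> P0 t0 Lsc0 c0P; near=> r; split.
- near: r; apply: filterS (near_pinfty_affine_le d0 (_ : 0 < P / 2)) => [r|].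
    by rewrite mul0r addr0; nra.
  by rewrite divr_gt0.
- near: r.
  apply: filterS (near_pinfty_affine_le (om + 2 * K + 1) (_ : 0 < t / 4)) => [r|].
    by rewrite mul0r addr0; nra.
  by rewrite divr_gt0.
- near: r; apply: filterS (near_pinfty_affine_le (L * s * C0 + 2 * K + L) Lsc0) => r.
  by nra.
- near: r; apply: filterS (near_pinfty_affine_le (2 * (c0 * K + C0) + 1) c0P) => r.
  by nra.
Unshelve. all: by end_near.
Qed.

Lemma coarse_inverse_near (R : realType) (X Y : normedModType R) (S : set X)
    (f : X -> Y) (g : Y -> X) K :
  coarsely_continuous_on [set: Y] g ->
  (exists M, forall x, S x -> `|g (f x) - x| <= M) -> 0 <= K ->
  exists C0, forall x y, S x -> `|y - f x| <= K -> `|g y - x| <= C0.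
Proof.
move=> hg [M gfM] K0; have [om gom] := hg (K + 1) (ltr_wpDl K0 ltr01).
exists (om + M) => x y Sx yfx; apply: le_trans (ler_distD (g (f x)) _ _) _.
by rewrite lerD ?gfM //; apply: gom => //; lra.
Qed.

Section CoarseInverse.
Variables (R : realType) (X Y : normedModType R) (S : set X).
Variables (f : X -> Y) (g : Y -> X) (K C0 : R).
Hypotheses (hgS : forall y, S (g y)) (hfgK : forall y, `|f (g y) - y| <= K).
Hypothesis hgC0 : forall x y, S x -> `|y - f x| <= K -> `|g y - x| <= C0.

Lemma admissible_inverse_bound d0 c0 : c_admissible S f K d0 c0 ->
  forall x r y, S x -> d0 <= r -> `|y - f x| <= r -> `|g y - x| <= c0 * r + C0.
Proof.
move=> [_ adm] x r y Sx d0r yr; have [x' [Sx' [x'x yx']]] := adm x r Sx d0r y yr.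
by apply: le_trans (ler_distD x' _ _) _; rewrite addrC lerD // hgC0.
Qed.

Lemma exists_far_inverse d0 c0 c2 Lam : c_admissible S f K d0 c0 -> 0 < c2 ->
  (forall d, K < d -> ~ c_admissible S f K d c2) -> d0 <= Lam ->
  exists a y, [/\ S a, Lam <= `|y - f a| & c2 * `|y - f a| < `|g y - a|].
Proof.
move=> adm c20 nadm d0Lam.
(* With this d, a radius |y - f a| < Lam would keep g y within c2 d of a. *)
pose d := Num.max (K + 1) ((c0 * Lam + C0) / c2).
have Kd : K < d by rewrite lt_max ltrDl ltr01.
have Lamd : c0 * Lam + C0 <= c2 * d.
  by rewrite [c2 * d]mulrC -ler_pdivrMr // le_max lexx orbT.
have [a [r [y [Sa [dr [yr far]]]]]] :
    exists a r y, [/\ S a, d <= r, `|y - f a| <= r &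
      forall x', S x' -> `|x' - a| <= c2 * r -> `|y - f x'| <= K -> False].
  apply: contrapT => nfar; apply: (nadm d Kd); split => // x r Sx dr y yr.
  apply: contrapT => nx; apply: nfar; exists x, r, y; split => // x' Sx' x'x yx'.
  by apply: nx; exists x'.
have ga : c2 * r < `|g y - a|.
  by rewrite ltNge; apply/negP => gar; apply: (far (g y)) => //; rewrite distrC.
exists a, y; split => //; last first.
  by apply: le_lt_trans ga; rewrite ler_pM2l.
rewrite leNgt; apply/negP => yLam.
have := admissible_inverse_bound adm Sa d0Lam (ltW yLam).
have := ler_wpM2l (ltW c20) dr; lra.
Qed.

Lemma inverse_separated L s0 om :
  (forall p q, S p -> S q -> s0 <= `|p - q| -> `|f p - f q| <= L * `|p - q|) ->
  (forall p q, S p -> S q -> `|p - q| <= s0 -> `|f p - f q| <= om) ->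
  forall y y', om + 2 * K < `|y - y'| -> `|y - y'| - 2 * K <= L * `|g y - g y'|.
Proof.
move=> lip small y y' yy'.
have fg : `|y - y'| <= K + `|f (g y) - f (g y')| + K.
  have := hfgK y'; have := hfgK y; rewrite distrC.
  have := ler_distD (f (g y)) y y'; have := ler_distD (f (g y')) (f (g y)) y'.
  lra.
have [gs0|gs0] := lerP `|g y - g y'| s0.
  by have := small _ _ (hgS y) (hgS y') gs0; lra.
by have := lip _ _ (hgS y) (hgS y') (ltW gs0); lra.
Qed.

Section LargeScale.
Variables (L s0 om : R).
Hypothesis lip : forall p q, S p -> S q -> s0 <= `|p - q| ->
  `|f p - f q| <= L * `|p - q|.
Hypothesis small : forall p q, S p -> S q -> `|p - q| <= s0 -> `|f p - f q| <= om.

Lemma separated_inverse_family d0 c0 t eta a y :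
  infinite_dimensional Y -> c_admissible S f K d0 c0 -> S a ->
  0 <= t -> 0 < eta ->
  d0 <= `|y - f a| / 2 * (1 + rho_bar Y t + eta) ->
  om + 2 * K < `|y - f a| * t / 4 ->
  exists e : nat -> X,
    (forall k,
      `|e k - a| <= c0 * (`|y - f a| / 2 * (1 + rho_bar Y t + eta) + K) + C0 /\
      `|e k - g y| <= c0 * (`|y - f a| / 2 * (1 + rho_bar Y t + eta) + K) + C0) /\
    (forall k l, k <> l -> `|y - f a| * t / 4 - 2 * K <= L * `|e k - e l|).
Proof.
move=> hY adm Sa t0 eta0; set rP := _ * (1 + _ + _) => d0rP omr.
have K0 : 0 <= K := le_trans (normr_ge0 _) (hfgK 0).
have [c0pos _] := adm.
have [m [mb msep]] := rho_bar_midpoints (f a) y hY t0 eta0.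
exists (fun k => g (m k)); split => [k|k l kl].
  have [mfa my] := mb k; split.
    apply: le_trans (admissible_inverse_bound adm Sa d0rP mfa) _.
    by rewrite lerD2r ler_pM2l // lerDl.
  apply: (admissible_inverse_bound adm (hgS y)); first by rewrite -[d0]addr0 lerD.
  by apply: le_trans (ler_distD y _ _) _; rewrite lerD // distrC.
have mkl := msep k l kl.
by apply: le_trans (inverse_separated lip small _); [rewrite lerD2r|lra].
Qed.

Lemma delta_bar_le_coarse d0 c0 c2 s t B : infinite_dimensional Y ->
  c_admissible S f K d0 c0 -> (forall d, K < d -> ~ c_admissible S f K d c2) ->
  0 < c2 -> 0 < L -> 0 < s -> 0 < t ->
  L * s * c0 < t / 4 -> c0 * (1 + rho_bar Y t) < B * c2 ->
  delta_bar X s <= B - 1.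
Proof.
move=> hY adm nadm c20 L0 s0pos t0 Lsc0 c0B.
have K0 : 0 <= K := le_trans (normr_ge0 _) (hfgK 0).
have [c0pos _] := adm; have rho0 := rho_bar_ge0 hY (ltW t0).
set A := 1 + rho_bar Y t in c0B.
pose eta := (B * c2 - c0 * A) / (2 * c0).
have eta0 : 0 < eta by rewrite divr_gt0 ?subr_gt0 // mulr_gt0.
have c0P : c0 * (A + eta) < B * c2.
  have -> : c0 * (A + eta) = (c0 * A + B * c2) / 2.
    by rewrite /eta; field; rewrite gt_eqF.
  by rewrite ltr_pdivrMr //; lra.
have PA : 0 < A + eta by rewrite /A; lra.
have [M [_ HM]] := near_pinfty_scale_conditions d0 om K C0 PA t0 Lsc0 c0P.
have d0Lam : d0 <= Num.max (M + 1) d0 by rewrite le_max lexx orbT.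
have [a [y [Sa Lamr far]]] := exists_far_inverse adm c20 nadm d0Lam.
set r := `|y - f a| in Lamr far.
have Mr : M < r by apply: lt_le_trans Lamr; rewrite lt_max ltrDl ltr01.
have [E1 E2 E3 E4] := HM r Mr.
have ga := admissible_inverse_bound adm Sa (le_trans d0Lam Lamr) (lexx r).
have [e [eb esep]] := separated_inverse_family hY adm Sa (ltW t0) eta0 E1 E2.
have B0 : 0 < B.
  have : 0 < B * c2 by apply: le_lt_trans c0B; rewrite mulr_ge0 ?ltW // /A; lra.
  by rewrite pmulr_lgt0.
apply: (delta_bar_le_separated (D := (r * t / 4 - 2 * K) / L) (B := B) s0pos _ eb).
- apply: contraTneq far => ->.
  by rewrite subrr normr0 ltNge negbK mulr_ge0 /r // ltW.
- by move=> k l kl; rewrite ler_pdivrMr // [_ * L]mulrC; apply: esep.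
- rewrite -(ler_pM2l L0) mulrBr mulr1 [L * (_ / L)]mulrC divfK ?gt_eqF // distrC.
  by have := ler_wpM2l (ltW s0pos) ga; nra.
- by apply: le_trans E4 _; rewrite distrC ler_pM2l // ltW.
Qed.

End LargeScale.

End CoarseInverse.

Lemma exists_ratio_bracket (R : realType) (c A eta : R) :
  0 < c -> 0 < A -> 0 < eta ->
  exists c1 c2, [/\ 0 < c2, c2 < c, c < c1 &
    forall c0, c0 < c1 -> c0 * A < (A + eta) * c2].
Proof.
move=> c0 A0 eta0; have Aeta : 0 < A + eta by lra.
exists (c * (A + eta / 2) / A), (c * (A + eta / 2) / (A + eta)); split.
- by rewrite divr_gt0 // mulr_gt0 //; lra.
- by rewrite ltr_pdivrMr // ltr_pM2l //; lra.
- by rewrite ltr_pdivlMr // ltr_pM2l //; lra.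
move=> c1 c1lt; rewrite mulrCA divff ?gt_eqF // mulr1.
apply: lt_le_trans (_ : c * (A + eta / 2) / A * A <= _); first by rewrite ltr_pM2r.
by rewrite divfK ?gt_eqF.
Qed.

Lemma Lip_scale_lt (R : realType) (Lc cc c0 t : R) : 0 < Lc -> 0 < cc -> 0 < t ->
  c0 < 2 * cc -> 2 * Lc * (t / (56 * Lc * cc)) * c0 < t / 4.
Proof.
move=> Lc0 cc0 t0 c0cc.
have -> : 2 * Lc * (t / (56 * Lc * cc)) = t / (28 * cc) by field; rewrite !gt_eqF.
have -> : t / 4 = t / (28 * cc) * (7 * cc) by field; rewrite gt_eqF.
by rewrite ltr_pM2l ?divr_gt0 ?mulr_gt0 //; lra.
Qed.

Unset Implicit Arguments.
Theorem theorem4p5 (R : realType) (X Y : completeNormedModType R)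
  (hX : infinite_dimensional X) (hY : infinite_dimensional Y)
  (S : set X) (f : X -> Y) (g : Y -> X)
  (hgS : forall y : Y, S (g y))
  (hf : coarsely_continuous_on S f)
  (hg : coarsely_continuous_on [set: Y] g)
  (hgf : exists M : R, forall x : X, S x -> `|g (f x) - x| <= M)
  (hfg : exists M : R, forall y : Y, `|f (g y) - y| <= M)
  (hlip : coarse_lipschitz S f)
  (t : R) (ht0 : 0 < t) (ht1 : t <= 1) :
  let K := sup [set `|f (g y) - y| | y in [set: Y]] in
  delta_bar X (t / (56 * fine (Lip_inf S f) * fine (c_inf S f K)))
    <= rho_bar Y t.
Proof.
cbv zeta; set K := sup _; have hfgK y : `|f (g y) - y| <= K.
  have [M fgM] := hfg; apply: ub_le_sup; last by exists y.
  by exists M => _ [y' _ <-].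
have [C0 hgC0] := coarse_inverse_near hg hgf (le_trans (normr_ge0 _) (hfgK 0)).
set Lc := fine (Lip_inf S f); set cc := fine (c_inf S f K); set s := t / _.
(* When [fine] turns Lip_inf or c_inf into 0 (e.g. from +oo), the modulus is
   taken at 0. *)
have : s = 0 \/ (0 < Lc /\ 0 < cc).
  rewrite /s !lt_def Lip_inf_fine_ge0 c_inf_fine_ge0 !andbT.
  have [->|] := eqVneq Lc 0; first by left; rewrite mulr0 mul0r invr0 mulr0.
  have [->|] := eqVneq cc 0; first by left; rewrite mulr0 invr0 mulr0.
  by right.
case=> [->|[Lc0 cc0]].
  exact: le_trans (delta_bar0_le0 hX) (rho_bar_ge0 hY (ltW ht0)).
apply/ler_addgt0Pr => eta eta0.
have -> : rho_bar Y t + eta = (1 + rho_bar Y t + eta) - 1 by lra.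
have A0 : 0 < 1 + rho_bar Y t by have := rho_bar_ge0 hY (ltW ht0); lra.
have [c1 [c2 [c20 c2cc ccc1 c1B]]] := exists_ratio_bracket cc0 A0 eta0.
have cc_min : cc < Num.min c1 (2 * cc) by rewrite lt_min ccc1 /=; lra.
have [d0 [c0 [_ adm]]] := c_inf_lt cc0 cc_min; rewrite lt_min => /andP[c0c1 c0cc].
have Lc2 : Lc < 2 * Lc by lra.
have [s0 s0pos lip] := Lip_inf_lt Lc0 Lc2.
have [om small] := hf s0 s0pos.
apply: (delta_bar_le_coarse hgS hfgK hgC0 lip small (t := t) hY adm
  (fun d Kd => c_inf_gt cc0 c2cc Kd) c20) => //; last exact: c1B.
- by rewrite mulr_gt0.
- by rewrite divr_gt0 // !mulr_gt0.
- exact: Lip_scale_lt.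
Qed.
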